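(* Let $(!, \delta, \varepsilon, \mathsf{m}, \mathsf{m}_K)$ be a symmetric monoidal comonad on a symmetric monoidal category $(\mathbb{X}, \otimes, K)$. Then the following are in bijective correspondence: (1) Cocommutative Hopf monoids in $(\mathbb{X}^!, \otimes^\mathsf{m}, (K, \mathsf{m}_K))$; (2) Cocommutative Hopf monoids $(H, \nabla, \mathsf{u}, \Delta, \mathsf{e}, \mathsf{S})$ in $(\mathbb{X}, \otimes, K)$ equipped with a natural transformation $\lambda_X: H \otimes !(X) \to !(H \otimes X)$ such that $\lambda$ is a symmetric monoidal mixed distributive law of $(H \otimes -, \mu^\nabla, \eta^\mathsf{u}, \mathsf{n}^\Delta, \mathsf{n}^\mathsf{e}_K)$ over $(!, \delta, \varepsilon, \mathsf{m}, \mathsf{m}_K)$, $\lambda$ satisfies $\alpha_{H,!(X),!(Y)};(\lambda_X\otimes 1_{!(Y)});\mathsf{m}_{H\otimes X,Y} = (1_H\otimes \mathsf{m}_{X,Y});\lambda_{X\otimes Y};!(\alpha_{H,X,Y})$, and $(\mathsf{S}\otimes 1_{!(X)});\lambda_X = \lambda_X;!(\mathsf{S}\otimes 1_X)$.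
   Context: Composition is in diagrammatic order; $\alpha,\ell,\rho$ are the associator and unitors, $\tau$ the canonical interchange $(A\otimes B)\otimes(C\otimes D)\to(A\otimes C)\otimes(B\otimes D)$. A Hopf monoid is a bimonoid with antipode $\mathsf{S}$ satisfying $\Delta;(1\otimes\mathsf{S});\nabla=\mathsf{e};\mathsf{u}=\Delta;(\mathsf{S}\otimes1);\nabla$. A symmetric monoidal comonad $(!,\delta,\varepsilon,\mathsf{m},\mathsf{m}_K)$ has lax monoidal structure $\mathsf{m}_{A,B}:!(A)\otimes!(B)\to!(A\otimes B)$, $\mathsf{m}_K:K\to!(K)$ compatible with $\delta,\varepsilon$; $\mathbb{X}^!$ is its category of coalgebras with $(A,\omega)\otimes^\mathsf{m}(B,\omega')=(A\otimes B,(\omega\otimes\omega');\mathsf{m}_{A,B})$ and unit $(K,\mathsf{m}_K)$. The monad $H\otimes-$ has $\mu^\nabla_X=\alpha_{H,H,X};(\nabla\otimes1_X)$, $\eta^\mathsf{u}_X=\ell^{-1}_X;(\mathsf{u}\otimes1_X)$, $\mathsf{n}^\Delta_{X,Y}=(\Delta\otimes1_{X\otimes Y});\tau_{H,H,X,Y}$, $\mathsf{n}^\mathsf{e}_K=\rho_H;\mathsf{e}$. A symmetric monoidal mixed distributive law of a symmetric comonoidal monad $(\mathsf{T},\mu,\eta,\mathsf{n},\mathsf{n}_K)$ over $(!,\delta,\varepsilon,\mathsf{m},\mathsf{m}_K)$ is a natural $\lambda_X:\mathsf{T}!(X)\to!\mathsf{T}(X)$ with $\mu_{!(X)};\lambda_X=\mathsf{T}(\lambda_X);\lambda_{\mathsf{T}(X)};!(\mu_X)$,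 $\eta_{!(X)};\lambda_X=!(\eta_X)$, $\mathsf{T}(\delta_X);\lambda_{!(X)};!(\lambda_X)=\lambda_X;\delta_{\mathsf{T}(X)}$, $\lambda_X;\varepsilon_{\mathsf{T}(X)}=\mathsf{T}(\varepsilon_X)$, $\mathsf{n}_{!(X),!(Y)};(\lambda_X\otimes\lambda_Y);\mathsf{m}_{\mathsf{T}(X),\mathsf{T}(Y)}=\mathsf{T}(\mathsf{m}_{X,Y});\lambda_{X\otimes Y};!(\mathsf{n}_{X,Y})$ and $\mathsf{n}_K;\mathsf{m}_K=\mathsf{T}(\mathsf{m}_K);\lambda_K;!(\mathsf{n}_K)$. *)

(* Composition is written in DIAGRAMMATIC
   order:  f >> g  means "first f, then g"  (the paper's  f;g ). *)

Set Implicit Arguments.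
Unset Strict Implicit.

Record SymMonCat := {
  ob : Type;
  hom : ob -> ob -> Type;
  idm : forall A, hom A A;
  comp : forall A B C, hom A B -> hom B C -> hom A C;
  comp_id_l : forall A B (f : hom A B), comp (idm A) f = f;
  comp_id_r : forall A B (f : hom A B), comp f (idm B) = f;
  comp_assoc : forall A B C D (f : hom A B) (g : hom B C) (h : hom C D),
      comp (comp f g) h = comp f (comp g h);

  tens : ob -> ob -> ob;
  tensm : forall A B C D, hom A B -> hom C D -> hom (tens A C) (tens B D);
  unit_ob : ob;
  tens_id : forall A B, tensm (idm A) (idm B) = idm (tens A B);
  tens_comp : forall A B C A' B' C' (f : hom A B) (g : hom B C)
      (f' : hom A' B') (g' : hom B' C'),
      tensm (comp f g) (comp f' g') = comp (tensm f f') (tensm g g');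

  assoc : forall A B C, hom (tens A (tens B C)) (tens (tens A B) C);
  assoc_inv : forall A B C, hom (tens (tens A B) C) (tens A (tens B C));
  assoc_iso1 : forall A B C, comp (assoc A B C) (assoc_inv A B C) = idm _;
  assoc_iso2 : forall A B C, comp (assoc_inv A B C) (assoc A B C) = idm _;
  assoc_nat : forall A B C A' B' C' (f : hom A A') (g : hom B B') (h : hom C C'),
      comp (tensm f (tensm g h)) (assoc A' B' C')
      = comp (assoc A B C) (tensm (tensm f g) h);

  lu : forall A, hom (tens unit_ob A) A;
  lu_inv : forall A, hom A (tens unit_ob A);
  lu_iso1 : forall A, comp (lu A) (lu_inv A) = idm _;
  lu_iso2 : forall A, comp (lu_inv A) (lu A) = idm _;
  lu_nat : forall A B (f : hom A B),
      comp (tensm (idm unit_ob) f) (lu B) = comp (lu A) f;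

  ru : forall A, hom (tens A unit_ob) A;
  ru_inv : forall A, hom A (tens A unit_ob);
  ru_iso1 : forall A, comp (ru A) (ru_inv A) = idm _;
  ru_iso2 : forall A, comp (ru_inv A) (ru A) = idm _;
  ru_nat : forall A B (f : hom A B),
      comp (tensm f (idm unit_ob)) (ru B) = comp (ru A) f;

  pentagon : forall A B C D,
      comp (assoc A B (tens C D)) (assoc (tens A B) C D)
      = comp (comp (tensm (idm A) (assoc B C D)) (assoc A (tens B C) D))
             (tensm (assoc A B C) (idm D));
  triangle : forall A B,
      comp (assoc A unit_ob B) (tensm (ru A) (idm B)) = tensm (idm A) (lu B);

  sym : forall A B, hom (tens A B) (tens B A);
  sym_nat : forall A B C D (f : hom A B) (g : hom C D),
      comp (tensm f g) (sym B D) = comp (sym A C) (tensm g f);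
  sym_inv : forall A B, comp (sym A B) (sym B A) = idm _;
  hexagon : forall A B C,
      comp (comp (assoc A B C) (sym (tens A B) C)) (assoc C A B)
      = comp (comp (tensm (idm A) (sym B C)) (assoc A C B)) (tensm (sym A C) (idm B))
}.

Arguments hom : clear implicits.
Arguments ob : clear implicits.
Arguments idm {s} A.
Arguments comp {s A B C} f g.
Arguments tens {s} A B.
Arguments tensm {s A B C D} f g.
Arguments unit_ob {s}.
Arguments assoc {s} A B C.
Arguments assoc_inv {s} A B C.
Arguments lu {s} A.
Arguments lu_inv {s} A.
Arguments ru {s} A.
Arguments ru_inv {s} A.
Arguments sym {s} A B.

Declare Scope smc_scope.
Delimit Scope smc_scope with smc.
Open Scope smc_scope.
Notation "f >> g" := (comp f g) (at level 60, right associativity) : smc_scope.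
Notation "f ** g" := (tensm f g) (at level 40, left associativity) : smc_scope.
Notation "A ⊗ B" := (tens A B) (at level 40, left associativity) : smc_scope.

Definition tau {X : SymMonCat} (A B C D : ob X)
  : hom X ((A ⊗ B) ⊗ (C ⊗ D)) ((A ⊗ C) ⊗ (B ⊗ D)) :=
  assoc_inv A B (C ⊗ D)
  >> (idm A ** assoc B C D)
  >> (idm A ** (sym B C ** idm D))
  >> (idm A ** assoc_inv C B D)
  >> assoc A C (B ⊗ D).

Record SymMonComonad (X : SymMonCat) := {
  bang : ob X -> ob X;
  bangm : forall A B, hom X A B -> hom X (bang A) (bang B);
  bang_id : forall A, bangm (idm A) = idm (bang A);
  bang_comp : forall A B C (f : hom X A B) (g : hom X B C),
      bangm (f >> g) = bangm f >> bangm g;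

  delta : forall A, hom X (bang A) (bang (bang A));
  delta_nat : forall A B (f : hom X A B),
      bangm f >> delta B = delta A >> bangm (bangm f);
  eps : forall A, hom X (bang A) A;
  eps_nat : forall A B (f : hom X A B), bangm f >> eps B = eps A >> f;
  comonad_counit_l : forall A, delta A >> eps (bang A) = idm (bang A);
  comonad_counit_r : forall A, delta A >> bangm (eps A) = idm (bang A);
  comonad_coassoc : forall A, delta A >> delta (bang A) = delta A >> bangm (delta A);

  mon : forall A B, hom X (bang A ⊗ bang B) (bang (A ⊗ B));
  monK : hom X unit_ob (bang unit_ob);
  mon_nat : forall A B C D (f : hom X A B) (g : hom X C D),
      (bangm f ** bangm g) >> mon B D = mon A C >> bangm (f ** g);
  mon_assoc : forall A B C,
      assoc (bang A) (bang B) (bang C) >> (mon A B ** idm (bang C)) >> mon (A ⊗ B) C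
      = (idm (bang A) ** mon B C) >> mon A (B ⊗ C) >> bangm (assoc A B C);
  mon_lunit : forall A,
      (monK ** idm (bang A)) >> mon unit_ob A >> bangm (lu A) = lu (bang A);
  mon_runit : forall A,
      (idm (bang A) ** monK) >> mon A unit_ob >> bangm (ru A) = ru (bang A);
  mon_sym : forall A B,
      sym (bang A) (bang B) >> mon B A = mon A B >> bangm (sym A B);

  delta_mon : forall A B,
      mon A B >> delta (A ⊗ B)
      = (delta A ** delta B) >> mon (bang A) (bang B) >> bangm (mon A B);
  delta_monK : monK >> delta unit_ob = monK >> bangm monK;
  eps_mon : forall A B, mon A B >> eps (A ⊗ B) = eps A ** eps B;
  eps_monK : monK >> eps unit_ob = idm unit_ob
}.

Arguments bang {X} s A.
Arguments bangm {X} s {A B} f.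
Arguments delta {X} s A.
Arguments eps {X} s A.
Arguments mon {X} s A B.
Arguments monK {X} s.

Record Hopf (X : SymMonCat) := {
  hcar : ob X;
  hmul : hom X (hcar ⊗ hcar) hcar;
  hunit : hom X unit_ob hcar;
  hcomul : hom X hcar (hcar ⊗ hcar);
  hcounit : hom X hcar unit_ob;
  hanti : hom X hcar hcar;
  hmul_assoc : assoc hcar hcar hcar >> (hmul ** idm hcar) >> hmul
               = (idm hcar ** hmul) >> hmul;
  hmul_lunit : (hunit ** idm hcar) >> hmul = lu hcar;
  hmul_runit : (idm hcar ** hunit) >> hmul = ru hcar;
  hcomul_coassoc : hcomul >> (hcomul ** idm hcar)
                   = hcomul >> (idm hcar ** hcomul) >> assoc hcar hcar hcar;
  hcomul_lcounit : hcomul >> (hcounit ** idm hcar) >> lu hcar = idm hcar;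
  hcomul_rcounit : hcomul >> (idm hcar ** hcounit) >> ru hcar = idm hcar;
  hbi_mul_comul : hmul >> hcomul
                  = (hcomul ** hcomul) >> tau hcar hcar hcar hcar >> (hmul ** hmul);
  hbi_unit_comul : hunit >> hcomul = lu_inv unit_ob >> (hunit ** hunit);
  hbi_mul_counit : hmul >> hcounit = (hcounit ** hcounit) >> lu unit_ob;
  hbi_unit_counit : hunit >> hcounit = idm unit_ob;
  hanti_r : hcomul >> (idm hcar ** hanti) >> hmul = hcounit >> hunit;
  hanti_l : hcomul >> (hanti ** idm hcar) >> hmul = hcounit >> hunit
}.

Definition cocommutative {X : SymMonCat} (H : Hopf X) : Prop :=
  hcomul H >> sym (hcar H) (hcar H) = hcomul H.

(* (1) Cocommutative Hopf monoids in the monoidal category X^! of      *)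
(* !-coalgebras, (A,ω) ⊗^m (B,ω') = (A⊗B, (ω⊗ω');m), unit (K, m_K).   *)
(* Since composition, ⊗, α, ℓ, ρ, σ of X^! are those of X, such a      *)
(* Hopf monoid is literally a Hopf monoid H of X together with a        *)
(* coalgebra structure ω on its carrier such that ∇, u, Δ, e, S are    *)
(* coalgebra morphisms; cocommutativity is the same equation as in X.  *)
Section Coalg.
Variables (X : SymMonCat) (B : SymMonComonad X).

Definition is_coalg (A : ob X) (w : hom X A (bang B A)) : Prop :=
  w >> eps B A = idm A /\ w >> delta B A = w >> bangm B w.

Definition coalg_tens (A A' : ob X) (w : hom X A (bang B A)) (w' : hom X A' (bang B A'))
  : hom X (A ⊗ A') (bang B (A ⊗ A')) := (w ** w') >> mon B A A'.

Definition is_coalg_mor (A A' : ob X) (w : hom X A (bang B A)) (w' : hom X A' (bang B A'))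
  (f : hom X A A') : Prop := w >> bangm B f = f >> w'.

Record HopfCoalg := {
  hc_hopf : Hopf X;
  hc_coact : hom X (hcar hc_hopf) (bang B (hcar hc_hopf));
  hc_is_coalg : is_coalg hc_coact;
  hc_mul_mor : is_coalg_mor (coalg_tens hc_coact hc_coact) hc_coact (hmul hc_hopf);
  hc_unit_mor : is_coalg_mor (monK B) hc_coact (hunit hc_hopf);
  hc_comul_mor : is_coalg_mor hc_coact (coalg_tens hc_coact hc_coact) (hcomul hc_hopf);
  hc_counit_mor : is_coalg_mor hc_coact (monK B) (hcounit hc_hopf);
  hc_anti_mor : is_coalg_mor hc_coact hc_coact (hanti hc_hopf);
  hc_cocomm : cocommutative hc_hopf
}.

Section Dist.
Variable H : Hopf X.
Let h := hcar H.

Definition Tm {A A' : ob X} (f : hom X A A') : hom X (h ⊗ A) (h ⊗ A') := idm h ** f.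
Definition muT (A : ob X) : hom X (h ⊗ (h ⊗ A)) (h ⊗ A) :=
  assoc h h A >> (hmul H ** idm A).
Definition etaT (A : ob X) : hom X A (h ⊗ A) := lu_inv A >> (hunit H ** idm A).
Definition nT (A A' : ob X) : hom X (h ⊗ (A ⊗ A')) ((h ⊗ A) ⊗ (h ⊗ A')) :=
  (hcomul H ** idm (A ⊗ A')) >> tau h h A A'.
Definition nTK : hom X (h ⊗ unit_ob) unit_ob := ru h >> hcounit H.

Definition is_sym_mon_mixed_dist_law
  (lam : forall A : ob X, hom X (h ⊗ bang B A) (bang B (h ⊗ A))) : Prop :=
  (forall A A' (f : hom X A A'), Tm (bangm B f) >> lam A' = lam A >> bangm B (Tm f)) /\
  (forall A, muT (bang B A) >> lam A = Tm (lam A) >> lam (h ⊗ A) >> bangm B (muT A)) /\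
  (forall A, etaT (bang B A) >> lam A = bangm B (etaT A)) /\
  (forall A, Tm (delta B A) >> lam (bang B A) >> bangm B (lam A)
             = lam A >> delta B (h ⊗ A)) /\
  (forall A, lam A >> eps B (h ⊗ A) = Tm (eps B A)) /\
  (forall A A', nT (bang B A) (bang B A') >> (lam A ** lam A') >> mon B (h ⊗ A) (h ⊗ A')
                = Tm (mon B A A') >> lam (A ⊗ A') >> bangm B (nT A A')) /\
  (nTK >> monK B = Tm (monK B) >> lam unit_ob >> bangm B nTK).

Definition lam_assoc_cond
  (lam : forall A : ob X, hom X (h ⊗ bang B A) (bang B (h ⊗ A))) : Prop :=
  forall A A', assoc h (bang B A) (bang B A') >> (lam A ** idm (bang B A'))
                 >> mon B (h ⊗ A) A'
               = (idm h ** mon B A A') >> lam (A ⊗ A') >> bangm B (assoc h A A').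

Definition lam_anti_cond
  (lam : forall A : ob X, hom X (h ⊗ bang B A) (bang B (h ⊗ A))) : Prop :=
  forall A, (hanti H ** idm (bang B A)) >> lam A = lam A >> bangm B (hanti H ** idm A).
End Dist.

Record HopfLambda := {
  hl_hopf : Hopf X;
  hl_cocomm : cocommutative hl_hopf;
  hl_lam : forall A : ob X, hom X (hcar hl_hopf ⊗ bang B A) (bang B (hcar hl_hopf ⊗ A));
  hl_dist : is_sym_mon_mixed_dist_law hl_lam;
  hl_assoc : lam_assoc_cond hl_lam;
  hl_anti : lam_anti_cond hl_lam
}.
End Coalg.

Arguments hc_hopf {X B} h.
Arguments hl_hopf {X B} h.

Definition bijective_map {T U : Type} (f : T -> U) : Prop :=
  (forall x y, f x = f y -> x = y) /\ (forall y, exists x, f x = y).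

(* A coalgebra structure [w : H -> !H] gives the transformation
   [lam_A = (w ⊗ 1); m_{H,A}], and a transformation [lam] gives back
   [w = ρ⁻¹; (1 ⊗ m_K); lam_K; !ρ].  These are mutually inverse: one way by the
   unit law of [m], the other because naturality and the associativity
   condition force [lam] to have the first form.  For [lam] of this form the
   two sides of each axiom at an object [A] are the two sides of one
   requirement on [(H, w)] put into a fixed context: the [μ], [η], [n], [n_K]
   and antipode axioms correspond to [∇], [u], [Δ], [e], [S] being coalgebra
   morphisms, and the [δ], [ε] axioms to [w] being a coalgebra.  At [A = K]
   the context can be cancelled, since [f ↦ (f ⊗ 1); m_{Y,K}] is split mono. *)

From Stdlib Require Import Setoid FunctionalExtensionality ProofIrrelevance.
Open Scope smc_scope.

(* Composites are kept right-associated; to rewrite with [e : f1 >> .. >> fn = g]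
   inside a longer chain [f1 >> .. >> fn >> k], we first extend [e] by an
   arbitrary [k] and right-associate it. *)
Ltac chain_rewrite e :=
  first
    [ rewrite e
    | let E := fresh in
      epose proof (f_equal (fun t => t >> _) e) as E;
      cbv beta in E; rewrite ?comp_assoc in E; rewrite E; clear E ];
  rewrite ?comp_assoc.

Lemma bijective_map_of_inverse {T U : Type} (f : T -> U) (g : U -> T) :
  (forall x, g (f x) = x) -> (forall y, f (g y) = y) -> bijective_map f.
Proof.
  intros gf fg; split.
  - intros x y e. rewrite <- (gf x), <- (gf y), e; reflexivity.
  - intro y; exists (g y); apply fg.
Qed.

Section MonoidalCategory.
Context {X : SymMonCat}.

Lemma tensm_comp {A B C A' B' C'} (f : hom X A B) (g : hom X B C)
    (f' : hom X A' B') (g' : hom X B' C') :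
  (f ** f') >> (g ** g') = (f >> g) ** (f' >> g').
Proof. symmetry; apply tens_comp. Qed.

Lemma tensm_comp_idl {A B C D} (f : hom X B C) (g : hom X C D) :
  (idm A ** f) >> (idm A ** g) = idm A ** (f >> g).
Proof. rewrite tensm_comp, comp_id_l; reflexivity. Qed.

Lemma tensm_comp_idr {A B C D} (f : hom X B C) (g : hom X C D) :
  (f ** idm A) >> (g ** idm A) = (f >> g) ** idm A.
Proof. rewrite tensm_comp, comp_id_l; reflexivity. Qed.

Lemma tensm_comp_idlA {A B C D E} (f : hom X B C) (g : hom X C D) (k : hom X (A ⊗ D) E) :
  (idm A ** f) >> ((idm A ** g) >> k) = (idm A ** (f >> g)) >> k.
Proof. rewrite <- comp_assoc, tensm_comp_idl; reflexivity. Qed.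

Lemma tensm_comp_idrA {A B C D E} (f : hom X B C) (g : hom X C D) (k : hom X (D ⊗ A) E) :
  (f ** idm A) >> ((g ** idm A) >> k) = ((f >> g) ** idm A) >> k.
Proof. rewrite <- comp_assoc, tensm_comp_idr; reflexivity. Qed.

Lemma tensm_split_l {A B C D} (f : hom X A B) (g : hom X C D) :
  f ** g = (f ** idm C) >> (idm B ** g).
Proof. rewrite tensm_comp, comp_id_l, comp_id_r; reflexivity. Qed.

Lemma tensm_split_r {A B C D} (f : hom X A B) (g : hom X C D) :
  f ** g = (idm A ** g) >> (f ** idm D).
Proof. rewrite tensm_comp, comp_id_l, comp_id_r; reflexivity. Qed.

Lemma tensm_interchange {A B C D} (f : hom X A B) (g : hom X C D) :
  (idm A ** g) >> (f ** idm D) = (f ** idm C) >> (idm B ** g).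
Proof. rewrite <- tensm_split_l, <- tensm_split_r; reflexivity. Qed.

Lemma tensm_slide_l {A A' B B' C C'} (a : hom X A A')
    (u : hom X B B') (v : hom X B' C') (u' : hom X B C) (v' : hom X C C') :
  u >> v = u' >> v' -> (a ** u) >> (idm A' ** v) = (idm A ** u') >> (a ** v').
Proof. intro e. rewrite !tensm_comp, comp_id_l, comp_id_r, e; reflexivity. Qed.

Lemma tensm_slide_r {A A' B B' C C'} (a : hom X A A')
    (u : hom X B B') (v : hom X B' C') (u' : hom X B C) (v' : hom X C C') :
  u >> v = u' >> v' -> (u ** a) >> (v ** idm A') = (u' ** idm A) >> (v' ** a).
Proof. intro e. rewrite !tensm_comp, comp_id_l, comp_id_r, e; reflexivity. Qed.

Lemma split_epi_cancel {A B C} (i : hom X A B) (j : hom X B A) (f g : hom X B C) :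
  j >> i = idm B -> i >> f = i >> g -> f = g.
Proof.
  intros ji e.
  rewrite <- (comp_id_l f), <- (comp_id_l g), <- ji, !comp_assoc, e; reflexivity.
Qed.

Lemma split_mono_cancel {A B C} (i : hom X B C) (j : hom X C B) (f g : hom X A B) :
  i >> j = idm B -> f >> i = g >> i -> f = g.
Proof.
  intros ij e.
  rewrite <- (comp_id_r f), <- (comp_id_r g), <- ij, <- !comp_assoc, e; reflexivity.
Qed.

Lemma assoc_inv_nat {A B C A' B' C'} (f : hom X A A') (g : hom X B B') (h : hom X C C') :
  ((f ** g) ** h) >> assoc_inv A' B' C' = assoc_inv A B C >> (f ** (g ** h)).
Proof.
  apply (split_epi_cancel (assoc A B C) (assoc_inv A B C)); [apply assoc_iso2|].
  rewrite <- comp_assoc, <- assoc_nat, comp_assoc, assoc_iso1, comp_id_r.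
  rewrite <- comp_assoc, assoc_iso1, comp_id_l; reflexivity.
Qed.

Lemma tau_nat {A B C D A' B' C' D'}
    (a : hom X A A') (b : hom X B B') (c : hom X C C') (d : hom X D D') :
  ((a ** b) ** (c ** d)) >> tau A' B' C' D' = tau A B C D >> ((a ** c) ** (b ** d)).
Proof.
  unfold tau; rewrite !comp_assoc.
  chain_rewrite (assoc_inv_nat a b (c ** d)).
  chain_rewrite (tensm_slide_l a _ _ _ _ (assoc_nat b c d)).
  chain_rewrite (tensm_slide_l a _ _ _ _ (tensm_slide_r d _ _ _ _ (sym_nat b c))).
  chain_rewrite (tensm_slide_l a _ _ _ _ (assoc_inv_nat c b d)).
  rewrite assoc_nat; reflexivity.
Qed.

Lemma tau_tau (A B C D : ob X) : tau A B C D >> tau A C B D = idm _.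
Proof.
  unfold tau; rewrite !comp_assoc.
  chain_rewrite (assoc_iso1 A C (B ⊗ D)); rewrite comp_id_l.
  chain_rewrite (tensm_comp_idl (A := A) (assoc_inv C B D) (assoc C B D)).
  rewrite assoc_iso2, tens_id, comp_id_l.
  chain_rewrite (tensm_comp_idl (A := A) (sym B C ** idm D) (sym C B ** idm D)).
  rewrite tensm_comp_idr, sym_inv, !tens_id, comp_id_l.
  chain_rewrite (tensm_comp_idl (A := A) (assoc B C D) (assoc_inv B C D)).
  rewrite assoc_iso1, tens_id, comp_id_l.
  apply assoc_iso2.
Qed.

Lemma triangle_lu_inv (A B : ob X) :
  (idm A ** lu_inv B) >> (assoc A unit_ob B >> (ru A ** idm B)) = idm _.
Proof. rewrite triangle, tensm_comp_idl, lu_iso2, tens_id; reflexivity. Qed.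

Lemma triangle_ru_inv (A B : ob X) :
  (idm A ** lu_inv B) >> assoc A unit_ob B = ru_inv A ** idm B.
Proof.
  apply (split_mono_cancel (ru A ** idm B) (ru_inv A ** idm B));
    [rewrite tensm_comp_idr, ru_iso1, tens_id; reflexivity|].
  rewrite comp_assoc, triangle_lu_inv, tensm_comp_idr, ru_iso2, tens_id; reflexivity.
Qed.

End MonoidalCategory.

Section MonoidalComonad.
Context {X : SymMonCat} (B : SymMonComonad X).
Notation K := (@unit_ob X).

Lemma mon_nat_l {A A'} (f : hom X A A') C :
  (bangm B f ** idm (bang B C)) >> mon B A' C = mon B A C >> bangm B (f ** idm C).
Proof. rewrite <- bang_id, mon_nat; reflexivity. Qed.

Lemma mon_nat_r {A A'} (f : hom X A A') C :
  (idm (bang B C) ** bangm B f) >> mon B C A' = mon B C A >> bangm B (idm C ** f).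
Proof. rewrite <- bang_id, mon_nat; reflexivity. Qed.

Lemma bangm_inverse {A A'} (f : hom X A A') (g : hom X A' A) :
  f >> g = idm A -> bangm B f >> bangm B g = idm _.
Proof. intro e. rewrite <- bang_comp, e, bang_id; reflexivity. Qed.

Lemma mon_lunit_inv (A : ob X) :
  lu_inv (bang B A) >> ((monK B ** idm (bang B A)) >> mon B K A) = bangm B (lu_inv A).
Proof.
  apply (split_mono_cancel (bangm B (lu A)) (bangm B (lu_inv A)));
    [apply bangm_inverse, lu_iso1|].
  rewrite !comp_assoc, mon_lunit, lu_iso2, <- bang_comp, lu_iso2, bang_id; reflexivity.
Qed.

Lemma mon_runit_retraction {Z Y} (f : hom X Z (bang B Y)) :
  ru_inv Z >> ((f ** monK B) >> (mon B Y K >> bangm B (ru Y))) = f.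
Proof.
  rewrite (tensm_split_l f (monK B)), !comp_assoc.
  chain_rewrite (mon_runit B Y). chain_rewrite (ru_nat f).
  rewrite <- comp_assoc, ru_iso2, comp_id_l; reflexivity.
Qed.

Lemma mon_unit_cancel {Z Y} (f g : hom X Z (bang B Y)) :
  (f ** idm (bang B K)) >> mon B Y K = (g ** idm (bang B K)) >> mon B Y K -> f = g.
Proof.
  intro e. rewrite <- (mon_runit_retraction f), <- (mon_runit_retraction g).
  rewrite (tensm_split_r f (monK B)), (tensm_split_r g (monK B)), !comp_assoc.
  chain_rewrite e; reflexivity.
Qed.

Lemma mon_bang_section_cancel {Z Y W} (f g : hom X Z (bang B Y))
    (s : hom X K W) (r : hom X W K) :
  s >> r = idm K ->
  (f ** bangm B s) >> mon B Y W = (g ** bangm B s) >> mon B Y W -> f = g.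
Proof.
  intros sr e. apply mon_unit_cancel.
  assert (E : forall f : hom X Z (bang B Y),
    (f ** idm _) >> mon B Y K
    = (f ** bangm B s) >> (mon B Y W >> bangm B (idm Y ** r))).
  { intro f0. chain_rewrite (eq_sym (mon_nat_r r Y)).
    rewrite <- comp_assoc, tensm_comp, comp_id_r, (bangm_inverse _ _ sr); reflexivity. }
  rewrite !E. chain_rewrite e; reflexivity.
Qed.

Lemma mon_assoc_inv (A A' A'' : ob X) :
  (mon B A A' ** idm (bang B A'')) >> (mon B (A ⊗ A') A'' >> bangm B (assoc_inv A A' A''))
  = assoc_inv _ _ _ >> ((idm (bang B A) ** mon B A' A'') >> mon B A (A' ⊗ A'')).
Proof.
  apply (split_epi_cancel (assoc _ _ _) (assoc_inv _ _ _)); [apply assoc_iso2|].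
  chain_rewrite (assoc_iso1 (bang B A) (bang B A') (bang B A'')). rewrite comp_id_l.
  apply (split_mono_cancel (bangm B (assoc A A' A'')) (bangm B (assoc_inv A A' A'')));
    [apply bangm_inverse, assoc_iso1|].
  rewrite !comp_assoc, <- bang_comp, assoc_iso2, bang_id, comp_id_r.
  apply mon_assoc.
Qed.

Lemma mon_tau (A A' C C' : ob X) :
  tau (bang B A) (bang B A') (bang B C) (bang B C')
    >> ((mon B A C ** mon B A' C') >> mon B (A ⊗ C) (A' ⊗ C'))
  = (mon B A A' ** mon B C C') >> (mon B (A ⊗ A') (C ⊗ C') >> bangm B (tau A A' C C')).
Proof.
  unfold tau; rewrite !comp_assoc.
  rewrite (tensm_split_r (mon B A C) (mon B A' C')), <- tens_id, !comp_assoc.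
  chain_rewrite (eq_sym (assoc_nat (idm (bang B A)) (idm (bang B C)) (mon B A' C'))).
  chain_rewrite (mon_assoc B A C (A' ⊗ C')).
  rewrite !(tensm_comp_idlA (A := bang B A)), !comp_assoc.
  chain_rewrite (eq_sym (mon_assoc_inv C A' C')).
  rewrite (tensm_comp_idrA (A := bang B C') (sym (bang B A') (bang B C)) (mon B C A')).
  rewrite (mon_sym B A' C).
  rewrite <- (tensm_comp_idrA (A := bang B C') (mon B A' C) (bangm B (sym A' C))).
  chain_rewrite (mon_nat_l (sym A' C) C').
  chain_rewrite (mon_assoc B A' C C').
  rewrite <- !bang_comp.
  rewrite <- (tensm_comp_idl (A := bang B A) (idm (bang B A') ** mon B C C') (mon B A' (C ⊗ C') >> _)).
  rewrite <- (tensm_comp_idl (A := bang B A) (mon B A' (C ⊗ C')) (bangm B _)).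
  rewrite !comp_assoc.
  chain_rewrite (mon_nat_r (assoc A' C C' >> ((sym A' C ** idm C') >> assoc_inv C A' C')) A).
  chain_rewrite (eq_sym (assoc_inv_nat (idm (bang B A)) (idm (bang B A')) (mon B C C'))).
  chain_rewrite (eq_sym (mon_assoc_inv A A' (C ⊗ C'))).
  rewrite tens_id.
  chain_rewrite (tensm_comp (idm (bang B A ⊗ bang B A')) (mon B A A') (mon B C C') (idm _)).
  rewrite comp_id_l, comp_id_r.
  rewrite !(tensm_comp_idlA (A := A)), !comp_assoc, !bang_comp.
  reflexivity.
Qed.

Lemma tensm_eps_unit_cancel {Z Z'} (f g : hom X Z Z') :
  f ** eps B K = g ** eps B K -> f = g.
Proof.
  intro e. apply (split_epi_cancel (ru Z) (ru_inv Z)); [apply ru_iso2|].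
  rewrite <- !ru_nat.
  assert (E : forall f : hom X Z Z', f ** idm K = (idm Z ** monK B) >> (f ** eps B K)).
  { intro f0. rewrite tensm_comp, comp_id_l, eps_monK; reflexivity. }
  rewrite !E, e; reflexivity.
Qed.

Lemma mon_delta_unit_retraction {Z Y} (f : hom X Z (bang B (bang B Y))) :
  (idm Z ** monK B) >> ((f ** delta B K) >> (mon B (bang B Y) (bang B K)
    >> (bangm B (mon B Y K) >> bangm B (bangm B (ru Y)))))
  = ru Z >> f.
Proof.
  chain_rewrite (tensm_comp (idm Z) f (monK B) (delta B K)).
  rewrite comp_id_l, delta_monK.
  rewrite <- (comp_id_r f) at 1. rewrite <- tensm_comp, !comp_assoc.
  chain_rewrite (mon_nat_r (monK B) (bang B Y)).
  rewrite <- !bang_comp, ?comp_assoc, (mon_runit B Y).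
  rewrite (tensm_split_l f (monK B)), !comp_assoc.
  chain_rewrite (mon_runit B (bang B Y)).
  apply ru_nat.
Qed.

Lemma mon_delta_unit_cancel {Z Y} (f g : hom X Z (bang B (bang B Y))) :
  (f ** delta B K) >> (mon B (bang B Y) (bang B K) >> bangm B (mon B Y K))
  = (g ** delta B K) >> (mon B (bang B Y) (bang B K) >> bangm B (mon B Y K)) -> f = g.
Proof.
  intro e. apply (split_epi_cancel (ru Z) (ru_inv Z)); [apply ru_iso2|].
  rewrite <- (mon_delta_unit_retraction f), <- (mon_delta_unit_retraction g).
  chain_rewrite e; reflexivity.
Qed.

Lemma mon_tau_unit_cancel {Z Y1 Y2} (f g : hom X Z (bang B (Y1 ⊗ Y2))) :
  (f ** mon B K K) >> (mon B (Y1 ⊗ Y2) (K ⊗ K) >> bangm B (tau Y1 Y2 K K))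
  = (g ** mon B K K) >> (mon B (Y1 ⊗ Y2) (K ⊗ K) >> bangm B (tau Y1 Y2 K K)) -> f = g.
Proof.
  intro e. rewrite <- !comp_assoc in e.
  apply (split_mono_cancel _ (bangm B (tau Y1 K Y2 K))) in e;
    [|apply bangm_inverse, tau_tau].
  apply (mon_bang_section_cancel f g (lu_inv K) (lu K) (lu_iso2 K)).
  rewrite <- (mon_lunit_inv K).
  assert (E : forall f : hom X Z (bang B (Y1 ⊗ Y2)),
    (f ** (lu_inv (bang B K) >> ((monK B ** idm (bang B K)) >> mon B K K)))
      >> mon B (Y1 ⊗ Y2) (K ⊗ K)
    = (idm Z ** (lu_inv (bang B K) >> (monK B ** idm (bang B K))))
      >> ((f ** mon B K K) >> mon B (Y1 ⊗ Y2) (K ⊗ K))).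
  { intro f0.
    chain_rewrite (tensm_comp (idm Z) f0
      (lu_inv (bang B K) >> (monK B ** idm (bang B K))) (mon B K K)).
    rewrite comp_id_l, ?comp_assoc; reflexivity. }
  rewrite !E, e; reflexivity.
Qed.

End MonoidalComonad.

Section LambdaOfCoaction.
Context {X : SymMonCat} (B : SymMonComonad X) (H : Hopf X).
Notation h := (hcar H).
Notation K := (@unit_ob X).

Definition lam_of_coact (w : hom X h (bang B h)) (A : ob X)
  : hom X (h ⊗ bang B A) (bang B (h ⊗ A)) :=
  (w ** idm (bang B A)) >> mon B h A.

Variable w : hom X h (bang B h).
Notation L := (lam_of_coact w).

Lemma lam_of_coact_nat A A' (f : hom X A A') :
  Tm H (bangm B f) >> L A' = L A >> bangm B (Tm H f).
Proof.
  unfold lam_of_coact, Tm.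
  chain_rewrite (tensm_interchange w (bangm B f)).
  chain_rewrite (mon_nat_r B f h); reflexivity.
Qed.

Lemma lam_of_coact_assoc : lam_assoc_cond L.
Proof.
  intros A A'. unfold lam_of_coact; rewrite !comp_assoc.
  rewrite <- (tensm_comp_idrA (A := bang B A') (w ** idm (bang B A)) (mon B h A)).
  chain_rewrite (eq_sym (assoc_nat w (idm (bang B A)) (idm (bang B A')))).
  chain_rewrite (mon_assoc B h A A').
  rewrite tens_id. chain_rewrite (tensm_interchange w (mon B A A')); reflexivity.
Qed.

Lemma lam_of_coact_mu_lhs A :
  muT H (bang B A) >> L A
  = assoc h h (bang B A) >> (((hmul H >> w) ** idm _) >> mon B h A).
Proof. unfold muT, lam_of_coact; rewrite !comp_assoc, tensm_comp_idrA; reflexivity. Qed.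

Lemma lam_of_coact_mu_rhs A :
  Tm H (L A) >> (L (h ⊗ A) >> bangm B (muT H A))
  = assoc h h (bang B A)
    >> ((((w ** w) >> (mon B h h >> bangm B (hmul H))) ** idm _) >> mon B h A).
Proof.
  unfold muT, lam_of_coact, Tm; rewrite !comp_assoc, !bang_comp.
  chain_rewrite (tensm_interchange w ((w ** idm (bang B A)) >> mon B h A)).
  rewrite <- (tensm_comp_idl (A := bang B h) (w ** idm (bang B A)) (mon B h A)).
  rewrite !comp_assoc.
  chain_rewrite (eq_sym (mon_assoc B h h A)).
  chain_rewrite (tensm_comp w (idm _) (idm _) (w ** idm (bang B A))).
  rewrite comp_id_l, comp_id_r.
  chain_rewrite (assoc_nat w w (idm (bang B A))).
  chain_rewrite (eq_sym (mon_nat_l B (hmul H) A)).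
  rewrite !tensm_comp_idrA, !comp_assoc; reflexivity.
Qed.

Lemma lam_of_coact_eta_lhs A :
  etaT H (bang B A) >> L A
  = lu_inv (bang B A) >> (((hunit H >> w) ** idm _) >> mon B h A).
Proof. unfold etaT, lam_of_coact; rewrite !comp_assoc, tensm_comp_idrA; reflexivity. Qed.

Lemma lam_of_coact_eta_rhs A :
  bangm B (etaT H A)
  = lu_inv (bang B A) >> (((monK B >> bangm B (hunit H)) ** idm _) >> mon B h A).
Proof.
  unfold etaT; rewrite bang_comp, <- (mon_lunit_inv B A), !comp_assoc.
  chain_rewrite (eq_sym (mon_nat_l B (hunit H) A)).
  rewrite tensm_comp_idrA; reflexivity.
Qed.

Lemma lam_of_coact_delta_lhs A :
  Tm H (delta B A) >> (L (bang B A) >> bangm B (L A))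
  = ((w >> bangm B w) ** delta B A)
    >> (mon B (bang B h) (bang B A) >> bangm B (mon B h A)).
Proof.
  unfold Tm, lam_of_coact; rewrite bang_comp, !comp_assoc.
  chain_rewrite (tensm_interchange w (delta B A)).
  chain_rewrite (eq_sym (mon_nat_l B w (bang B A))).
  chain_rewrite (tensm_comp w (idm _) (idm _) (delta B A)).
  rewrite comp_id_l, comp_id_r.
  chain_rewrite (tensm_comp w (bangm B w) (delta B A) (idm _)).
  rewrite comp_id_r; reflexivity.
Qed.

Lemma lam_of_coact_delta_rhs A :
  L A >> delta B (h ⊗ A)
  = ((w >> delta B h) ** delta B A)
    >> (mon B (bang B h) (bang B A) >> bangm B (mon B h A)).
Proof.
  unfold lam_of_coact; rewrite comp_assoc, delta_mon, ?comp_assoc.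
  chain_rewrite (tensm_comp w (delta B h) (idm _) (delta B A)).
  rewrite comp_id_l; reflexivity.
Qed.

Lemma lam_of_coact_eps A : L A >> eps B (h ⊗ A) = (w >> eps B h) ** eps B A.
Proof.
  unfold lam_of_coact; rewrite comp_assoc, eps_mon, tensm_comp, comp_id_l; reflexivity.
Qed.

Lemma lam_of_coact_n_lhs A A' :
  nT H (bang B A) (bang B A') >> ((L A ** L A') >> mon B (h ⊗ A) (h ⊗ A'))
  = ((hcomul H >> ((w ** w) >> mon B h h)) ** mon B A A')
    >> (mon B (h ⊗ h) (A ⊗ A') >> bangm B (tau h h A A')).
Proof.
  unfold nT, lam_of_coact; rewrite !comp_assoc.
  rewrite (tens_comp (w ** idm _) (mon B h A) (w ** idm _) (mon B h A')), !comp_assoc.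
  chain_rewrite (eq_sym (tau_nat w w (idm (bang B A)) (idm (bang B A')))).
  chain_rewrite (mon_tau B h h A A').
  rewrite tens_id.
  chain_rewrite (tensm_comp (hcomul H) (w ** w) (idm (bang B A ⊗ bang B A')) (idm _)).
  rewrite comp_id_l.
  chain_rewrite (tensm_comp (hcomul H >> (w ** w)) (mon B h h)
    (idm (bang B A ⊗ bang B A')) (mon B A A')).
  rewrite comp_id_l, ?comp_assoc; reflexivity.
Qed.

Lemma lam_of_coact_n_rhs A A' :
  Tm H (mon B A A') >> (L (A ⊗ A') >> bangm B (nT H A A'))
  = ((w >> bangm B (hcomul H)) ** mon B A A')
    >> (mon B (h ⊗ h) (A ⊗ A') >> bangm B (tau h h A A')).
Proof.
  unfold Tm, lam_of_coact, nT; rewrite bang_comp, !comp_assoc.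
  chain_rewrite (tensm_interchange w (mon B A A')).
  chain_rewrite (eq_sym (mon_nat_l B (hcomul H) (A ⊗ A'))).
  chain_rewrite (tensm_comp w (idm _) (idm _) (mon B A A')).
  rewrite comp_id_l, comp_id_r.
  chain_rewrite (tensm_comp w (bangm B (hcomul H)) (mon B A A') (idm _)).
  rewrite comp_id_r; reflexivity.
Qed.

Lemma lam_of_coact_nK_rhs :
  Tm H (monK B) >> (L K >> bangm B (nTK H)) = ru h >> (w >> bangm B (hcounit H)).
Proof.
  unfold Tm, lam_of_coact, nTK; rewrite bang_comp, !comp_assoc.
  chain_rewrite (tensm_interchange w (monK B)).
  chain_rewrite (mon_runit B h).
  chain_rewrite (ru_nat w); reflexivity.
Qed.

Lemma lam_of_coact_anti_lhs A :
  (hanti H ** idm (bang B A)) >> L A = ((hanti H >> w) ** idm _) >> mon B h A.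
Proof. unfold lam_of_coact; rewrite tensm_comp_idrA; reflexivity. Qed.

Lemma lam_of_coact_anti_rhs A :
  L A >> bangm B (hanti H ** idm A) = ((w >> bangm B (hanti H)) ** idm _) >> mon B h A.
Proof.
  unfold lam_of_coact; rewrite comp_assoc.
  chain_rewrite (eq_sym (mon_nat_l B (hanti H) A)).
  rewrite tensm_comp_idrA; reflexivity.
Qed.

Lemma lam_of_coact_mu_iff :
  (forall A, muT H (bang B A) >> L A = Tm H (L A) >> L (h ⊗ A) >> bangm B (muT H A))
  <-> is_coalg_mor (coalg_tens w w) w (hmul H).
Proof.
  unfold is_coalg_mor, coalg_tens; split.
  - intro P. specialize (P K).
    rewrite lam_of_coact_mu_lhs, lam_of_coact_mu_rhs in P.
    apply (split_epi_cancel _ _ _ _ (assoc_iso2 _ _ _)), (mon_unit_cancel B) in P.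
    rewrite comp_assoc, P; reflexivity.
  - intros P A.
    rewrite lam_of_coact_mu_lhs, lam_of_coact_mu_rhs, <- P, comp_assoc; reflexivity.
Qed.

Lemma lam_of_coact_eta_iff :
  (forall A, etaT H (bang B A) >> L A = bangm B (etaT H A))
  <-> is_coalg_mor (monK B) w (hunit H).
Proof.
  unfold is_coalg_mor; split.
  - intro P. specialize (P K).
    rewrite lam_of_coact_eta_lhs, lam_of_coact_eta_rhs in P.
    apply (split_epi_cancel _ _ _ _ (lu_iso1 _)), (mon_unit_cancel B) in P.
    symmetry; exact P.
  - intros P A. rewrite lam_of_coact_eta_lhs, lam_of_coact_eta_rhs, P; reflexivity.
Qed.

Lemma lam_of_coact_delta_iff :
  (forall A, Tm H (delta B A) >> L (bang B A) >> bangm B (L A) = L A >> delta B (h ⊗ A))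
  <-> w >> delta B h = w >> bangm B w.
Proof.
  split.
  - intro P. specialize (P K).
    rewrite lam_of_coact_delta_lhs, lam_of_coact_delta_rhs in P.
    symmetry; exact (mon_delta_unit_cancel B _ _ P).
  - intros P A. rewrite lam_of_coact_delta_lhs, lam_of_coact_delta_rhs, P; reflexivity.
Qed.

Lemma lam_of_coact_eps_iff :
  (forall A, L A >> eps B (h ⊗ A) = Tm H (eps B A)) <-> w >> eps B h = idm h.
Proof.
  unfold Tm; split.
  - intro P. specialize (P K). rewrite lam_of_coact_eps in P.
    exact (tensm_eps_unit_cancel B _ _ P).
  - intros P A. rewrite lam_of_coact_eps, P; reflexivity.
Qed.

Lemma lam_of_coact_n_iff :
  (forall A A', nT H (bang B A) (bang B A') >> (L A ** L A') >> mon B (h ⊗ A) (h ⊗ A')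
                = Tm H (mon B A A') >> L (A ⊗ A') >> bangm B (nT H A A'))
  <-> is_coalg_mor w (coalg_tens w w) (hcomul H).
Proof.
  unfold is_coalg_mor, coalg_tens; split.
  - intro P. specialize (P K K).
    rewrite lam_of_coact_n_lhs, lam_of_coact_n_rhs in P.
    symmetry; exact (mon_tau_unit_cancel B _ _ P).
  - intros P A A'. rewrite lam_of_coact_n_lhs, lam_of_coact_n_rhs, P; reflexivity.
Qed.

Lemma lam_of_coact_nK_iff :
  nTK H >> monK B = Tm H (monK B) >> L K >> bangm B (nTK H)
  <-> is_coalg_mor w (monK B) (hcounit H).
Proof.
  rewrite lam_of_coact_nK_rhs; unfold is_coalg_mor, nTK; rewrite comp_assoc; split.
  - intro P. symmetry; exact (split_epi_cancel _ _ _ _ (ru_iso2 h) P).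
  - intro P. rewrite P; reflexivity.
Qed.

Lemma lam_of_coact_anti_iff : lam_anti_cond L <-> is_coalg_mor w w (hanti H).
Proof.
  unfold lam_anti_cond, is_coalg_mor; split.
  - intro P. specialize (P K).
    rewrite lam_of_coact_anti_lhs, lam_of_coact_anti_rhs in P.
    symmetry; exact (mon_unit_cancel B _ _ P).
  - intros P A. rewrite lam_of_coact_anti_lhs, lam_of_coact_anti_rhs, P; reflexivity.
Qed.

Lemma lam_of_coact_dist_law_iff :
  is_sym_mon_mixed_dist_law L
  <-> is_coalg w
      /\ is_coalg_mor (coalg_tens w w) w (hmul H)
      /\ is_coalg_mor (monK B) w (hunit H)
      /\ is_coalg_mor w (coalg_tens w w) (hcomul H)
      /\ is_coalg_mor w (monK B) (hcounit H).
Proof.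
  unfold is_sym_mon_mixed_dist_law, is_coalg.
  rewrite lam_of_coact_mu_iff, lam_of_coact_eta_iff, lam_of_coact_delta_iff,
    lam_of_coact_eps_iff, lam_of_coact_n_iff, lam_of_coact_nK_iff.
  pose proof lam_of_coact_nat.
  intuition.
Qed.

End LambdaOfCoaction.

Section CoactionOfLambda.
Context {X : SymMonCat} (B : SymMonComonad X) (H : Hopf X).
Notation h := (hcar H).
Notation K := (@unit_ob X).

Definition coact_of_lam (lam : forall A : ob X, hom X (h ⊗ bang B A) (bang B (h ⊗ A)))
  : hom X h (bang B h) :=
  ru_inv h >> ((idm h ** monK B) >> (lam K >> bangm B (ru h))).

Lemma coact_of_lam_of_coact (w : hom X h (bang B h)) :
  coact_of_lam (lam_of_coact B H w) = w.
Proof.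
  unfold coact_of_lam, lam_of_coact; rewrite !comp_assoc.
  chain_rewrite (tensm_comp (idm h) w (monK B) (idm _)).
  rewrite comp_id_l, comp_id_r.
  apply mon_runit_retraction.
Qed.

(* Naturality at [lu_inv A] and the associativity condition at [(K, A)]
   express [lam A] through [lam K]. *)
Lemma lam_of_coact_of_lam (lam : forall A : ob X, hom X (h ⊗ bang B A) (bang B (h ⊗ A))) :
  (forall A A' (f : hom X A A'), Tm H (bangm B f) >> lam A' = lam A >> bangm B (Tm H f)) ->
  lam_assoc_cond lam ->
  lam_of_coact B H (coact_of_lam lam) = lam.
Proof.
  intros lam_nat lam_assoc. apply functional_extensionality_dep; intro A.
  symmetry.
  rewrite <- (comp_id_r (lam A)), <- bang_id, <- (triangle_lu_inv h A), !bang_comp.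
  chain_rewrite (eq_sym (lam_nat _ _ (lu_inv A))). unfold Tm.
  rewrite <- (mon_lunit_inv B A).
  rewrite <- (tensm_comp_idl (A := h) (lu_inv (bang B A))
                ((monK B ** idm (bang B A)) >> mon B K A)).
  rewrite <- (tensm_comp_idl (A := h) (monK B ** idm (bang B A)) (mon B K A)).
  rewrite !comp_assoc.
  chain_rewrite (eq_sym (lam_assoc K A)).
  chain_rewrite (assoc_nat (idm h) (monK B) (idm (bang B A))).
  chain_rewrite (triangle_ru_inv h (bang B A)).
  chain_rewrite (eq_sym (mon_nat_l B (ru h) A)).
  rewrite !tensm_comp_idrA. unfold lam_of_coact, coact_of_lam.
  rewrite !comp_assoc; reflexivity.
Qed.

End CoactionOfLambda.

Section Correspondence.
Context {X : SymMonCat} (B : SymMonComonad X).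

Definition hopf_lambda_of_coalg (x : HopfCoalg B) : HopfLambda B :=
  @Build_HopfLambda X B (hc_hopf x) (hc_cocomm x) (lam_of_coact B (hc_hopf x) (hc_coact x))
    (proj2 (lam_of_coact_dist_law_iff B (hc_hopf x) (hc_coact x))
       (conj (hc_is_coalg x) (conj (hc_mul_mor x) (conj (hc_unit_mor x)
          (conj (hc_comul_mor x) (hc_counit_mor x))))))
    (lam_of_coact_assoc B (hc_hopf x) (hc_coact x))
    (proj2 (lam_of_coact_anti_iff B (hc_hopf x) (hc_coact x)) (hc_anti_mor x)).

Lemma lam_of_coact_of_hl_lam (y : HopfLambda B) :
  lam_of_coact B (hl_hopf y) (coact_of_lam B (hl_hopf y) (hl_lam y)) = hl_lam y.
Proof. apply lam_of_coact_of_lam; [exact (proj1 (hl_dist y)) | exact (hl_assoc y)]. Qed.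

Lemma coact_of_lam_conds (y : HopfLambda B) :
  let w := coact_of_lam B (hl_hopf y) (hl_lam y) in
  (is_coalg w
   /\ is_coalg_mor (coalg_tens w w) w (hmul (hl_hopf y))
   /\ is_coalg_mor (monK B) w (hunit (hl_hopf y))
   /\ is_coalg_mor w (coalg_tens w w) (hcomul (hl_hopf y))
   /\ is_coalg_mor w (monK B) (hcounit (hl_hopf y)))
  /\ is_coalg_mor w w (hanti (hl_hopf y)).
Proof.
  intro w.
  rewrite <- lam_of_coact_dist_law_iff, <- lam_of_coact_anti_iff.
  unfold w; rewrite lam_of_coact_of_hl_lam.
  exact (conj (hl_dist y) (hl_anti y)).
Qed.

Definition hopf_coalg_of_lambda (y : HopfLambda B) : HopfCoalg B.
Proof.
  refine (@Build_HopfCoalg X B (hl_hopf y) (coact_of_lam B (hl_hopf y) (hl_lam y)) _ _ _ _ _ _ (hl_cocomm y));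
    destruct (coact_of_lam_conds y) as [[? [? [? [? ?]]]] ?]; assumption.
Defined.

Lemma hopf_coalg_eq (x y : HopfCoalg B) :
  existT (fun H : Hopf X => hom X (hcar H) (bang B (hcar H))) (hc_hopf x) (hc_coact x)
  = existT _ (hc_hopf y) (hc_coact y) -> x = y.
Proof.
  destruct x, y; simpl; intro E. inversion_sigma E. subst.
  f_equal; apply proof_irrelevance.
Qed.

Lemma hopf_lambda_eq (x y : HopfLambda B) :
  existT (fun H : Hopf X => forall A, hom X (hcar H ⊗ bang B A) (bang B (hcar H ⊗ A)))
    (hl_hopf x) (hl_lam x)
  = existT _ (hl_hopf y) (hl_lam y) -> x = y.
Proof.
  destruct x, y; simpl; intro E. inversion_sigma E. subst.
  f_equal; apply proof_irrelevance.
Qed.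

Lemma hopf_coalg_of_lambda_of_coalg (x : HopfCoalg B) :
  hopf_coalg_of_lambda (hopf_lambda_of_coalg x) = x.
Proof. apply hopf_coalg_eq; simpl. rewrite coact_of_lam_of_coact; reflexivity. Qed.

Lemma hopf_lambda_of_coalg_of_lambda (y : HopfLambda B) :
  hopf_lambda_of_coalg (hopf_coalg_of_lambda y) = y.
Proof.
  apply hopf_lambda_eq; simpl. rewrite lam_of_coact_of_hl_lam; reflexivity.
Qed.

End Correspondence.

Theorem proposition5p8 (X : SymMonCat) (B : SymMonComonad X) :
  exists F : HopfCoalg B -> HopfLambda B,
    bijective_map F /\ (forall x : HopfCoalg B, hl_hopf (F x) = hc_hopf x).
Proof.
  exists (hopf_lambda_of_coalg B); split.
  - apply (bijective_map_of_inverse _ (hopf_coalg_of_lambda B)).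
    + apply hopf_coalg_of_lambda_of_coalg.
    + apply hopf_lambda_of_coalg_of_lambda.
  - reflexivity.
Qed.
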